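(* Let $\alpha$ and $\gamma$ be compositions such that $\bm\lambda(\alpha)=\bm\lambda(\gamma)$ and $\alpha\ne\gamma$. Then $K_{\alpha,\gamma}=0$, i.e., there is no composition tableau of shape $\alpha$ and content $\gamma$.
   Context: A composition is a finite sequence of positive integers; $\bm\lambda(\alpha)$ denotes the partition obtained by sorting the parts of $\alpha$ in weakly decreasing order. The diagram of a composition $\alpha=(\alpha_1,\dots,\alpha_\ell)$ has $\alpha_i$ cells in row $i$ (rows numbered from the top, cells $(i,j)$ in matrix notation). A composition tableau of shape $\alpha$ is a filling $T$ of the cells with positive integers such that: (CT1) entries weakly decrease left to right along each row; (CT2) entries of the leftmost column strictly increase from top to bottom; (CT3, triple rule) for any two cells $(i,k)$, $(j,k)$ of the diagram with $i<j$: if $\alpha_i\ge\alpha_j$ (and $k\ge2$) then $T(j,k)<T(i,k)$ or $T(i,k-1)<T(j,k)$; if $\alpha_i<\alpha_j$ then $T(j,k)<T(i,k)$ or $T(i,k)<T(j,k+1)$. A tableau has content $\gamma=(\gamma_1,\dots,\gamma_m)$ if for each $1\le i\le m$ the value $i$ occurs exactly $\gamma_i$ times and no other values occur. $K_{\alpha,\gamma}$ is the number of composition tableaux of shape $\alpha$ and content $\gamma$. *)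

From mathcomp Require Import all_boot.
Set Implicit Arguments. Unset Strict Implicit. Unset Printing Implicit Defensive.

Definition is_composition (a : seq nat) : Prop := all (fun x => 0 < x) a.

Definition comp_partition (a : seq nat) : seq nat := sort geq a.

(* Cells are 0-indexed: (i, j) with i < size a and j < nth 0 a i.
   Paper's cell (i+1, j+1) corresponds to our (i, j). *)
Definition in_diagram (a : seq nat) (i j : nat) : bool :=
  (i < size a) && (j < nth 0 a i).

(* A filling is a function nat -> nat -> nat; only values on the diagram matter. *)
Definition is_comp_tableau (a : seq nat) (T : nat -> nat -> nat) : Prop :=
  (forall i j, in_diagram a i j -> 0 < T i j) /\
  (forall i j, in_diagram a i j.+1 -> T i j.+1 <= T i j) /\
  (forall i, i.+1 < size a -> T i 0 < T i.+1 0) /\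
  (forall i j k, i < j -> in_diagram a i k -> in_diagram a j k ->
     (nth 0 a j <= nth 0 a i -> 0 < k ->
        T j k < T i k \/ T i k.-1 < T j k) /\
     (nth 0 a i < nth 0 a j ->
        T j k < T i k \/ T i k < T j k.+1)).

Definition count_entry (a : seq nat) (T : nat -> nat -> nat) (v : nat) : nat :=
  \sum_(i < size a) \sum_(j < nth 0 a i) (T i j == v).

Definition has_content (a : seq nat) (T : nat -> nat -> nat) (g : seq nat) : Prop :=
  (forall v, 1 <= v <= size g -> count_entry a T v = nth 0 g v.-1) /\
  (forall i j, in_diagram a i j -> 1 <= T i j <= size g).

(** Since [gamma] is a rearrangement of the parts of [alpha], both have
    [n = size alpha] parts, so the strictly increasing first column of a
    tableau with entries in [1..n] must read [1, 2, ..., n].  Column by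
    column, every row [i] is then forced to be filled with [i+1] alone:
    comparing the truncated parts [min (alpha_i, m)] and [min (gamma_i, m)],
    whose sums agree, shows that no value [r+1] may appear outside a short
    row [r], and the triple rule excludes it in all other positions.  Once
    all rows are constant, [alpha_i <= gamma_i] for every [i] and the sums
    agree, so [alpha = gamma]. *)

From mathcomp Require Import all_boot.
From mathcomp Require Import zify.

Set Implicit Arguments.
Unset Strict Implicit.
Unset Printing Implicit Defensive.

Lemma perm_sum_nth (F : nat -> nat) (s t : seq nat) : perm_eq s t ->
  \sum_(i < size s) F (nth 0 s i) = \sum_(i < size t) F (nth 0 t i).
Proof.
move=> perm_st.
rewrite -(big_mkord xpredT (F \o nth 0 s)) -(big_mkord xpredT (F \o nth 0 t)).
by rewrite -!(big_nth 0 xpredT F); apply: perm_big.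
Qed.

Lemma eq_from_sum_leq (f g : nat -> nat) n :
  (forall i, i < n -> f i <= g i) -> \sum_(i < n) f i = \sum_(i < n) g i ->
  forall i, i < n -> f i = g i.
Proof.
move=> le_fg sum_fg i lt_in; apply/eqP; rewrite eqn_leq le_fg //=.
have /eqP : \sum_(k < n) (g k - f k) = 0.
  by rewrite sumnB ?sum_fg ?subnn // => k _; apply: le_fg.
by rewrite sum_nat_eq0 => /forallP/(_ (Ordinal lt_in)); rewrite subn_eq0.
Qed.

Section RowCount.

Variables (a : seq nat) (T : nat -> nat -> nat) (v : nat).

Definition row_count (i : nat) : nat := \sum_(j < nth 0 a i) (T i j == v).

Lemma row_count_le_count_entry i : i < size a -> row_count i <= count_entry a T v.
Proof. by move=> lt_i; rewrite /count_entry (bigD1 (Ordinal lt_i)) //= leq_addr. Qed.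

Lemma row_count2_le_count_entry r s : r < size a -> s < size a -> r != s ->
  row_count r + row_count s <= count_entry a T v.
Proof.
move=> lt_r lt_s neq_rs; rewrite /count_entry (bigD1 (Ordinal lt_r)) //=.
by rewrite (bigD1 (Ordinal lt_s)) 1?eq_sym //= addnA leq_addr.
Qed.

Lemma prefix_le_row_count i m : m <= nth 0 a i ->
  (forall j, j < m -> T i j = v) -> m <= row_count i.
Proof.
move=> le_m prefix_v.
rewrite /row_count -(big_mkord xpredT (fun j => nat_of_bool (T i j == v))).
rewrite (@big_cat_nat _ _ _ m) //=.
have -> : \sum_(0 <= j < m) (T i j == v) = \sum_(0 <= j < m) 1.
  by apply: eq_big_nat => j /andP[_ lt_j]; rewrite prefix_v ?eqxx.
by rewrite sum_nat_const_nat subn0 muln1 leq_addr.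
Qed.

Lemma row_count_gt0 i j : j < nth 0 a i -> T i j = v -> 0 < row_count i.
Proof. by move=> lt_j Tij; rewrite /row_count (bigD1 (Ordinal lt_j)) //= Tij eqxx. Qed.

End RowCount.

Section RowsOfTableau.

Variables (a g : seq nat) (T : nat -> nat -> nat).
Hypotheses (a_comp : is_composition a) (perm_ag : perm_eq a g).
Hypotheses (tabT : is_comp_tableau a T) (contT : has_content a T g).

Lemma in_diagram_col0 i : i < size a -> in_diagram a i 0.
Proof. by move=> lt_i; rewrite /in_diagram lt_i (allP a_comp) ?mem_nth. Qed.

Lemma count_entry_succ i : i < size a -> count_entry a T i.+1 = nth 0 g i.
Proof. by move=> lt_i; rewrite contT.1 // -(perm_size perm_ag) ltnS lt_i. Qed.

Lemma entry_le_col0 i j : in_diagram a i j -> T i j <= T i 0.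
Proof.
elim: j => [//|j IHj] /[dup] /andP[lt_i lt_j] cell.
apply: leq_trans (tabT.2.1 _ _ cell) (IHj _).
by rewrite /in_diagram lt_i ltnW.
Qed.

Lemma first_column_entry i : i < size a -> T i 0 = i.+1.
Proof.
have [pos [_ [incr _]]] := tabT; have bound := contT.2.
rewrite -(perm_size perm_ag) in bound.
have lower k : k < size a -> k.+1 <= T k 0.
  elim: k => [|k IHk] lt_k.
    exact: pos _ _ (in_diagram_col0 lt_k).
  exact: leq_ltn_trans (IHk (ltnW lt_k)) (incr _ lt_k).
have upper d k : k < size a -> k + d = (size a).-1 -> T k 0 + d <= size a.
  elim: d k => [|d IHd] k lt_k sum_kd.
    by rewrite addn0; case/andP: (bound _ _ (in_diagram_col0 lt_k)).
  have lt_k1 : k.+1 < size a by lia.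
  by have := incr _ lt_k1; have := IHd k.+1 lt_k1 ltac:(lia); lia.
move=> lt_i; have := lower _ lt_i.
by have := upper ((size a).-1 - i) i lt_i ltac:(lia); lia.
Qed.

Lemma column_entries_neq i j k : i < j ->
  in_diagram a i k -> in_diagram a j k -> T i k != T j k.
Proof.
move=> lt_ij cell_i cell_j; case: k cell_i cell_j => [|k] cell_i cell_j.
  have [/andP[lt_i _] /andP[lt_j _]] := (cell_i, cell_j).
  by rewrite !first_column_entry // eqSS neq_ltn lt_ij.
have [rule_ge rule_lt] := tabT.2.2.2 i j k.+1 lt_ij cell_i cell_j.
case: (leqP (nth 0 a j) (nth 0 a i)) => cmp.
  by have := tabT.2.1 i k cell_i; case: (rule_ge cmp isT) => /=; lia.
have cell_j2 : in_diagram a j k.+2.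
  by move: cell_i cell_j; rewrite /in_diagram => /andP[_ ?] /andP[-> _]; lia.
by have := tabT.2.1 j k.+1 cell_j2; case: (rule_lt cmp); lia.
Qed.

Definition constant_rows_upto (m : nat) : Prop :=
  forall i j, in_diagram a i j -> j < m -> T i j = i.+1.

Lemma minn_parts_eq m : constant_rows_upto m ->
  forall i, i < size a -> minn (nth 0 a i) m = minn (nth 0 g i) m.
Proof.
move=> const; apply: eq_from_sum_leq => [i lt_i|]; last first.
  by rewrite (perm_sum_nth (minn^~ m) perm_ag) (perm_size perm_ag).
rewrite -count_entry_succ //.
have prefix : minn (nth 0 a i) m <= row_count a T i.+1 i.
  apply: prefix_le_row_count (geq_minl _ _) _ => j.
  by rewrite leq_min => /andP[lt_ja lt_jm]; apply: const; rewrite // /in_diagram lt_i.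
by have := row_count_le_count_entry T i.+1 lt_i; lia.
Qed.

(* A row [r] shorter than [m] is filled with [r+1] and [gamma_r = alpha_r]
   by [minn_parts_eq], so it uses up every entry [r+1]. *)
Lemma entry_outside_short_row m r i j : constant_rows_upto m ->
  r < size a -> nth 0 a r < m -> r != i -> in_diagram a i j -> T i j != r.+1.
Proof.
move=> const lt_r short neq_ri /andP[lt_i lt_j]; apply/eqP => Tij.
have := minn_parts_eq const lt_r; rewrite -count_entry_succ //.
have full : nth 0 a r <= row_count a T r.+1 r.
  apply: prefix_le_row_count => // k lt_k.
  by apply: const; rewrite /in_diagram ?lt_r //; lia.
have := row_count_gt0 lt_j Tij.
by have := row_count2_le_count_entry T r.+1 lt_r lt_i neq_ri; lia.
Qed.

Lemma entry_beyond_row_end k r j : constant_rows_upto k.+1 -> r < j ->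
  nth 0 a r = k.+1 -> in_diagram a j k.+1 -> r.+1 < T j k.+1.
Proof.
move=> const lt_rj end_r /[dup] cell_j /andP[lt_j lt_kj].
have cell_r : in_diagram a r k by rewrite /in_diagram end_r ltnSn andbT; lia.
have cell_jk : in_diagram a j k by rewrite /in_diagram lt_j ltnW.
have [_ rule_lt] := tabT.2.2.2 r j k lt_rj cell_r cell_jk.
have [Trk Tjk] := (const r k cell_r (ltnSn k), const j k cell_jk (ltnSn k)).
by case: (rule_lt ltac:(lia)); lia.
Qed.

(* Strong induction on the entry [x = T i (k+1)]: if [x = r+1] with [r < i],
   row [r] is either too short, too long (then [T r (k+1) < x] by column
   strictness), or ends at column [k], and each case is excluded. *)
Lemma constant_rows_upto_succ k : constant_rows_upto k.+1 -> constant_rows_upto k.+2.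
Proof.
move=> const i j cell; rewrite ltnS leq_eqVlt => /orP[/eqP eq_j|]; last exact: const.
move: i cell; rewrite {j}eq_j.
suff: forall x i, in_diagram a i k.+1 -> T i k.+1 = x -> x = i.+1.
  by move=> key i cell; apply: key.
elim/ltn_ind => x IHx i /[dup] cell /andP[lt_i _] Tix.
have [r Er] : exists r, x = r.+1 by exists x.-1; rewrite prednK // -Tix tabT.1.
rewrite {x}Er in IHx Tix *.
have le_ri : r <= i by rewrite -ltnS -Tix -(first_column_entry lt_i) entry_le_col0.
apply/eqP; rewrite eqSS eqn_leq le_ri leqNgt; apply/negP => lt_ri.
have [lt_r neq_ri] : r < size a /\ r != i by split; [lia | rewrite neq_ltn lt_ri].
case: (ltngtP (nth 0 a r) k.+1) => cmp.
- by move: (entry_outside_short_row const lt_r cmp neq_ri cell); rewrite Tix eqxx.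
- have cell_r : in_diagram a r k.+1 by rewrite /in_diagram lt_r cmp.
  have Trk : T r k = r.+1 by apply: const; rewrite // /in_diagram lt_r ltnW.
  have lt_T : T r k.+1 < r.+1.
    have := tabT.2.1 r k cell_r; have := column_entries_neq lt_ri cell_r cell.
    by rewrite Tix Trk; lia.
  by have := IHx _ lt_T r cell_r erefl; lia.
- by have := entry_beyond_row_end const lt_ri cmp cell; rewrite Tix ltnn.
Qed.

Lemma constant_rows m : constant_rows_upto m.
Proof.
elim: m => [i j _ //|[|k] IHm]; last exact: constant_rows_upto_succ.
by move=> i [|//] /andP[lt_i _] _; apply: first_column_entry.
Qed.

End RowsOfTableau.

Theorem lemma5p2 (alpha gamma : seq nat) :
  is_composition alpha -> is_composition gamma ->
  comp_partition alpha = comp_partition gamma -> alpha <> gamma ->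
  ~ (exists T : nat -> nat -> nat,
       is_comp_tableau alpha T /\ has_content alpha T gamma).
Proof.
move=> alpha_comp _ eq_part neq_ag [T [tabT contT]]; apply: neq_ag.
have perm_ag : perm_eq alpha gamma.
  by rewrite -(perm_sort geq alpha) [sort _ _]eq_part perm_sort.
apply: (@eq_from_nth _ 0) => [|i lt_i]; first exact: perm_size.
have const_rows := constant_rows alpha_comp perm_ag tabT contT.
have := minn_parts_eq perm_ag contT (const_rows (nth 0 alpha i + nth 0 gamma i)) lt_i.
by rewrite (minn_idPl (leq_addr _ _)) (minn_idPl (leq_addl _ _)).
Qed.
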